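(* Let $A,A^*\in\mathrm{End}(\mathcal V)$ satisfy the Askey–Wilson relations $$[A,[A,A^*]_q]_{q^{-1}}=\rho A^*+\omega A+\eta\,\mathbb I,\qquad [A^*,[A^*,A]_q]_{q^{-1}}=\rho A+\omega A^*+\eta^*\,\mathbb I$$ with structure constants $$\rho=-\frac{(q^2-q^{-2})^2}{r_0^2},\quad \omega=\omega^{\{\cdot,*,\diamond\}},\quad \eta=\frac{q+q^{-1}}{r_0}\,\omega^{\{\cdot,\diamond,*\}},\quad \eta^*=\frac{q+q^{-1}}{r_0}\,\omega^{\{*,\diamond,\cdot\}}.$$ Let $A^\diamond$ be defined as below. Then for every ordered pair $(a,b)$ of distinct labels in $\{\cdot,*,\diamond\}$, with $c$ the remaining label, $$[A^a,[A^a,A^b]_q]_{q^{-1}}=-\frac{(q^2-q^{-2})^2}{r_0^2}A^b+\omega^{\{a,b,c\}}A^a+\frac{q+q^{-1}}{r_0}\,\omega^{\{a,c,b\}}\,\mathbb I .$$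
   Context: $q\in\mathbb C^*$ is not a root of unity, $s\in\{0,\tfrac12,1,\tfrac32,\dots\}$, and $\mathcal V$ is a complex vector space of dimension $2s+1$ with identity $\mathbb I$. Notation: $[X,Y]_q=qXY-q^{-1}YX$. Labels $a$ range over $\{\cdot,*,\diamond\}$; we write $A^{\cdot}=A$, $\mathsf b^{\cdot}=\mathsf b$, $\mathsf c^{\cdot}=\mathsf c$. Fix nonzero complex numbers $r_0$, $\mathsf b^a,\mathsf c^a$ ($a\in\{\cdot,*,\diamond\}$) with $r_0^{-2}=\mathsf b\mathsf c=\mathsf b^*\mathsf c^*=\mathsf b^\diamond\mathsf c^\diamond$. Put $\theta^a_M=\mathsf b^aq^{2M}+\mathsf c^aq^{-2M}$ (so $\theta^a_s=\mathsf b^aq^{2s}+\mathsf c^aq^{-2s}$), and for pairwise distinct labels $a,b,c$, $\omega^{\{a,b,c\}}=-(q-q^{-1})^2\big(\theta^a_s\theta^b_s-r_0^{-1}(q^{2s+1}+q^{-2s-1})\theta^c_s\big)$. Define $A^\diamond=\frac{r_0}{q^2-q^{-2}}[A^*,A]_q+\frac{r_0\,\omega^{\{\cdot,*,\diamond\}}}{(q-q^{-1})(q^2-q^{-2})}\mathbb I$. *)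

From HB Require Import structures.
From mathcomp Require Import all_boot all_order all_algebra.
From mathcomp Require Import complex.
Set Implicit Arguments. Unset Strict Implicit. Unset Printing Implicit Defensive.
Import Order.TTheory GRing.Theory Num.Theory.
Local Open Scope ring_scope.

Inductive label := Ldot | Lstar | Ldiam.

Section AW.
Variable C : fieldType.

Definition qcomm {n} (q : C) (X Y : 'M[C]_n) : 'M[C]_n :=
  q *: (X * Y) - q^-1 *: (Y * X).

(* theta^a_s with 2s = n2 :  b^a q^{2s} + c^a q^{-2s} *)
Definition theta_s (b c : label -> C) (q : C) (n2 : nat) (a : label) : C :=
  b a * q ^+ n2 + c a * q ^- n2.

Definition omega (b c : label -> C) (q r0 : C) (n2 : nat) (x y z : label) : C :=
  - (q - q^-1) ^+ 2 *
    (theta_s b c q n2 x * theta_s b c q n2 y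
     - r0^-1 * (q ^+ n2.+1 + q ^- n2.+1) * theta_s b c q n2 z).

Definition Adiam {n} (b c : label -> C) (q r0 : C) (n2 : nat) (A As : 'M[C]_n) : 'M[C]_n :=
  (r0 / (q ^+ 2 - q ^- 2)) *: qcomm q As A
  + (r0 * omega b c q r0 n2 Ldot Lstar Ldiam
       / ((q - q^-1) * (q ^+ 2 - q ^- 2)))%:M.

Definition Alab {n} (b c : label -> C) (q r0 : C) (n2 : nat) (A As : 'M[C]_n)
  (a : label) : 'M[C]_n :=
  match a with
  | Ldot => A
  | Lstar => As
  | Ldiam => Adiam b c q r0 n2 A As
  end.
End AW.

(* Put k = (q^2 - q^-2) / r0, so that rho = -k^2 and (q + q^-1) / r0 = k / (q - q^-1).
   The identity [u,[u,v]_q]_q^-1 = -[[u,v]_q,u]_q = -[u,[v,u]_q]_q shows that, once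
   [u,v]_q = k w + (scalar), the Askey-Wilson relation of the pair (v,u) is equivalent to
   [v,w]_q = k u + (scalar), and that of (u,v) to [w,u]_q = k v + (scalar).  The definition
   of A^diamond is [A^*,A]_q = k A^diamond + (scalar), so the two given relations produce
   the cyclic presentation [A^*,A]_q, [A,A^diamond]_q, [A^diamond,A^*]_q, and reading the
   same equivalences backwards gives the four remaining relations. *)

From HB Require Import structures.
From mathcomp Require Import all_boot all_order all_algebra.
From mathcomp Require Import complex.
From mathcomp Require Import ring.
Import Order.TTheory GRing.Theory Num.Theory.
Local Open Scope ring_scope.

Section QBracket.
Context {F : fieldType} {V : algType F}.

Definition qbracket (q : F) (a b : V) : V := q *: (a * b) - q^-1 *: (b * a).

Lemma qbracketV (q : F) (a b : V) : q != 0 -> qbracket q^-1 a b = - qbracket q b a.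
Proof. by move=> q0; rewrite /qbracket invrK opprB. Qed.

Lemma qbracket_nestedC (q : F) (a b : V) :
  qbracket q (qbracket q a b) a = qbracket q a (qbracket q b a).
Proof.
rewrite /qbracket !mulrBr !mulrBl -!scalerAl -!scalerAr !scalerBr !scalerA !mulrA.
rewrite (mulrC q^-1 q) -!addrA; congr (_ + _).
by rewrite !opprB addrCA [RHS]addrCA (addrC (- _)).
Qed.

Lemma qbracket_affiner (q k l : F) (a c : V) :
  qbracket q a (k *: c - l *: 1) = k *: qbracket q a c - (l * (q - q^-1)) *: a.
Proof.
rewrite /qbracket mulrBr mulrBl -!scalerAr -!scalerAl mulr1 mul1r.
rewrite !scalerBr !scalerA mulrBr scalerBl.
rewrite (mulrC k q) (mulrC k q^-1) (mulrC l q) (mulrC l q^-1).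
by rewrite !opprB addrACA [RHS]addrACA [in RHS](addrC (- _)).
Qed.

Lemma qbracket_affinel (q k l : F) (c b : V) :
  qbracket q (k *: c - l *: 1) b = k *: qbracket q c b - (l * (q - q^-1)) *: b.
Proof.
rewrite /qbracket mulrBr mulrBl -!scalerAr -!scalerAl mulr1 mul1r.
rewrite !scalerBr !scalerA mulrBr scalerBl.
rewrite (mulrC k q) (mulrC k q^-1) (mulrC l q) (mulrC l q^-1).
by rewrite !opprB addrACA [RHS]addrACA [in RHS](addrC (- _)).
Qed.
End QBracket.

Section AskeyWilsonTriangle.
Context {F : fieldType} {V : algType F} (q k : F).
Hypotheses (q_neq0 : q != 0) (tau_neq0 : q - q^-1 != 0) (k_neq0 : k != 0).

Let tau := q - q^-1.

Definition qbracket_rel (u v w : V) (om : F) :=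
  qbracket q u v = k *: w - (om / tau) *: 1.

(* With k = (q^2 - q^-2) / r0 this is the Askey-Wilson relation with rho = -k^2,
   omega = om and eta = (q + q^-1) / r0 * om'. *)
Definition aw_rel (u v : V) (om om' : F) :=
  qbracket q^-1 u (qbracket q u v) = - k ^+ 2 *: v + om *: u + (k / tau * om') *: 1.

Lemma aw_expansion_r {u v w : V} {om : F} :
  qbracket_rel u v w om -> qbracket q^-1 v (qbracket q v u) = om *: v - k *: qbracket q v w.
Proof.
move=> uvw; rewrite qbracketV // qbracket_nestedC uvw qbracket_affiner.
by rewrite divfK // opprB.
Qed.

Lemma aw_expansion_l {u v w : V} {om : F} :
  qbracket_rel u v w om -> qbracket q^-1 u (qbracket q u v) = om *: u - k *: qbracket q w u.
Proof.
by move=> uvw; rewrite qbracketV // uvw qbracket_affinel divfK // opprB.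
Qed.

Lemma aw_rel_solve (u v B : V) om om' :
  (om *: v - k *: B = - k ^+ 2 *: u + om *: v + (k / tau * om') *: 1) <->
  B = k *: u - (om' / tau) *: 1.
Proof.
have -> : - k ^+ 2 *: u + om *: v + (k / tau * om') *: 1 =
          om *: v - k *: (k *: u - (om' / tau) *: 1).
  rewrite scalerBr opprB !scalerA addrA scaleNr expr2 (mulrAC k) -(mulrA k).
  by rewrite [- _ + _]addrC addrAC.
by split=> [/addrI/oppr_inj/(scalerI k_neq0) | ->].
Qed.

Lemma qbracket_relE_r {u v w : V} {om_w : F} (om_u : F) : qbracket_rel u v w om_w ->
  qbracket_rel v w u om_u <-> aw_rel v u om_w om_u.
Proof. by move=> uvw; rewrite /aw_rel (aw_expansion_r uvw) aw_rel_solve. Qed.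

Lemma qbracket_relE_l {u v w : V} {om_w : F} (om_v : F) : qbracket_rel u v w om_w ->
  qbracket_rel w u v om_v <-> aw_rel u v om_w om_v.
Proof. by move=> uvw; rewrite /aw_rel (aw_expansion_l uvw) aw_rel_solve. Qed.

Theorem aw_triangle {X Y Z : V} {om1 om2 om3 : F} :
  Z = k^-1 *: qbracket q Y X + (om1 / (tau * k)) *: 1 ->
  aw_rel X Y om1 om2 -> aw_rel Y X om1 om3 ->
  [/\ aw_rel X Z om2 om1, aw_rel Z X om2 om3, aw_rel Z Y om3 om2 & aw_rel Y Z om3 om1].
Proof.
move=> defZ awXY awYX.
have YXZ : qbracket_rel Y X Z om1.
  rewrite /qbracket_rel defZ scalerDr scalerA mulfV // scale1r scalerA.
  by rewrite mulrCA (mulrC tau) invfM mulVKf // addrK.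
have XZY : qbracket_rel X Z Y om2 by rewrite (qbracket_relE_r _ YXZ).
have ZYX : qbracket_rel Z Y X om3 by rewrite (qbracket_relE_l _ YXZ).
split.
- by rewrite -(qbracket_relE_l _ XZY).
- by rewrite -(qbracket_relE_r _ XZY).
- by rewrite -(qbracket_relE_l _ ZYX).
- by rewrite -(qbracket_relE_r _ ZYX).
Qed.
End AskeyWilsonTriangle.

Local Open Scope complex_scope.

Theorem mainTheorem1 (R : rcfType) (n2 : nat) (q r0 : R[i]) (b c : label -> R[i])
  (A As : 'M[R[i]]_(n2.+1)) :
  q != 0 ->
  (forall k : nat, (0 < k)%N -> q ^+ k != 1) ->
  r0 != 0 ->
  (forall a, b a != 0) -> (forall a, c a != 0) ->
  (forall a, r0 ^- 2 = b a * c a) ->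
  qcomm q^-1 A (qcomm q A As) =
    (- (q ^+ 2 - q ^- 2) ^+ 2 / r0 ^+ 2) *: As
    + omega b c q r0 n2 Ldot Lstar Ldiam *: A
    + ((q + q^-1) / r0 * omega b c q r0 n2 Ldot Ldiam Lstar)%:M ->
  qcomm q^-1 As (qcomm q As A) =
    (- (q ^+ 2 - q ^- 2) ^+ 2 / r0 ^+ 2) *: A
    + omega b c q r0 n2 Ldot Lstar Ldiam *: As
    + ((q + q^-1) / r0 * omega b c q r0 n2 Lstar Ldiam Ldot)%:M ->
  forall x y z : label, x <> y -> y <> z -> x <> z ->
    let Aa := Alab b c q r0 n2 A As in
    qcomm q^-1 (Aa x) (qcomm q (Aa x) (Aa y)) =
      (- (q ^+ 2 - q ^- 2) ^+ 2 / r0 ^+ 2) *: Aa y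
      + omega b c q r0 n2 x y z *: Aa x
      + ((q + q^-1) / r0 * omega b c q r0 n2 x z y)%:M.
Proof.
move=> q0 q_not_root r0_neq0 _ _ _ awAAs awAsA x y z xy yz xz Aa.
set k := (q ^+ 2 - q ^- 2) / r0.
have q2_neq1 : q * q - 1 != 0 by rewrite subr_eq0 -expr2 q_not_root.
have q4_neq1 : (q * q) ^+ 2 - 1 != 0 by rewrite subr_eq0 -expr2 -exprM q_not_root.
have tau0 : q - q^-1 != 0.
  have -> : q - q^-1 = (q * q - 1) / q by field.
  by rewrite mulf_neq0 ?invr_eq0.
have k0 : k != 0.
  have -> : k = ((q * q) ^+ 2 - 1) / (q * q * r0) by rewrite /k; field; rewrite r0_neq0 q0.
  by rewrite mulf_neq0 ?invr_eq0 ?mulf_neq0.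
have rhoE : - (q ^+ 2 - q ^- 2) ^+ 2 / r0 ^+ 2 = - k ^+ 2 by rewrite expr_div_n mulNr.
have etaE : (q + q^-1) / r0 = k / (q - q^-1).
  by rewrite /k; field; rewrite q0 q2_neq1 r0_neq0.
have defZ : Adiam b c q r0 n2 A As = k^-1 *: qbracket q As A
    + (omega b c q r0 n2 Ldot Lstar Ldiam / ((q - q^-1) * k)) *: 1.
  rewrite /Adiam -[(_ / _)%:M]scalemx1 /k invf_div; congr (_ + _ *: _).
  by field; rewrite r0_neq0 q0 q2_neq1 q4_neq1.
have omegaC u v w : omega b c q r0 n2 u v w = omega b c q r0 n2 v u w.
  by rewrite /omega (mulrC (theta_s b c q n2 u)).
rewrite -![(_ / r0 * _)%:M]scalemx1 rhoE etaE in awAAs awAsA *.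
have [awAD awDA awDAs awAsD] := aw_triangle q k q0 tau0 k0 defZ awAAs awAsA.
case: x y z xy yz xz => [] [] [] xy yz xz;
  try by exfalso; first [exact: xy | exact: yz | exact: xz].
- exact: awAAs.
- exact: awAD.
- by rewrite (omegaC Lstar Ldot); exact: awAsA.
- by rewrite (omegaC Lstar Ldot); exact: awAsD.
- by rewrite (omegaC Ldiam Ldot) (omegaC Ldiam Lstar); exact: awDA.
- by rewrite (omegaC Ldiam Ldot) (omegaC Ldiam Lstar); exact: awDAs.
Qed.
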